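(* Let $c\in[\frac12,1)$ and let $d,\delta$ be positive integers with $d\ge\delta$. Let $G$ be a graph with maximum degree $\delta$ and $w:V(G)\to[0,1]$ a weight function with $w(V(G))=1$, and assume $G$ has no $d$-bounded $(w,c)$-balanced separator. Then for every $v\in V(G)$ the canonical star separation for $v$ is unique (i.e. $G\setminus N[v]$ has a unique connected component of largest weight).
   Context: For $X\subseteq V(G)$, $w(X)=\sum_{x\in X}w(x)$; $N(v)$ is the neighborhood of $v$, $N[v]=N(v)\cup\{v\}$; $N^d[v]$ is the set of vertices at distance at most $d$ from $v$. A set $X$ is $d$-bounded if $X\subseteq N^d[v]$ for some $v\in V(G)$. A set $X\subseteq V(G)$ is a $(w,c)$-balanced separator if every connected component $D$ of $G\setminus X$ satisfies $w(D)\le c$. A canonical star separation for $v$ is a triple $S_v=(A_v,C_v,B_v)$ where $B_v$ is a largest-weight connected component of $G\setminus N[v]$, $C_v$ consists of $v$ together with every vertex of $N(v)$ having a neighbor in $B_v$, and $A_v=V(G)\setminus(B_v\cup C_v)$. *)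

From HB Require Import structures.
From mathcomp Require Import all_boot all_order all_algebra.
Set Implicit Arguments. Unset Strict Implicit. Unset Printing Implicit Defensive.
Import Order.TTheory GRing.Theory Num.Theory.
Local Open Scope ring_scope.

Definition simple_graph (T : finType) (e : rel T) : Prop :=
  symmetric e /\ irreflexive e.

Definition wt (R : numDomainType) (T : finType) (w : T -> R) (X : {set T}) : R :=
  \sum_(x in X) w x.

Definition nbhd (T : finType) (e : rel T) (v : T) : {set T} := [set u | e v u].
Definition cnbhd (T : finType) (e : rel T) (v : T) : {set T} := v |: nbhd e v.

Definition degree (T : finType) (e : rel T) (v : T) : nat := #|nbhd e v|.

Definition max_degree_eq (T : finType) (e : rel T) (delta : nat) : Prop :=
  (forall v, (degree e v <= delta)%N) /\ exists v, degree e v = delta.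

Fixpoint ball (T : finType) (e : rel T) (v : T) (k : nat) : {set T} :=
  match k with
  | 0 => [set v]
  | k'.+1 => ball e v k' :|: [set u | [exists x in ball e v k', e x u]]
  end.

Definition d_bounded (T : finType) (e : rel T) (d : nat) (X : {set T}) : Prop :=
  exists v, X \subset ball e v d.

Definition del_rel (T : finType) (e : rel T) (X : {set T}) : rel T :=
  [rel x y | [&& e x y, x \notin X & y \notin X]].

Definition comp_of (T : finType) (e : rel T) (X : {set T}) (x : T) : {set T} :=
  [set y | (y \notin X) && connect (del_rel e X) x y].

Definition is_component (T : finType) (e : rel T) (X : {set T}) (D : {set T}) : Prop :=
  exists2 x, x \notin X & D = comp_of e X x.

Definition balanced_sep (R : numDomainType) (T : finType) (e : rel T) (w : T -> R)
  (c : R) (X : {set T}) : Prop :=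
  forall D, is_component e X D -> wt w D <= c.

(* N[v] lies in the ball of radius 1 <= d, so it is a d-bounded set and hence not a
   (w,c)-balanced separator: some component B of G \ N[v] has weight w(B) > c >= 1/2.
   Components are disjoint and the total weight is 1, so every other component has
   weight at most 1 - w(B) < 1/2 < w(B). *)
From mathcomp Require Import all_boot all_order all_algebra.
From mathcomp Require Import lra.
Set Implicit Arguments. Unset Strict Implicit. Unset Printing Implicit Defensive.
Import Order.TTheory GRing.Theory Num.Theory.
Local Open Scope ring_scope.

Section Balls.

Variables (T : finType) (e : rel T) (v : T).

Lemma sub_ball k m : (k <= m)%N -> ball e v k \subset ball e v m.
Proof.
elim: m => [|m IHm]; first by rewrite leqn0 => /eqP ->.
rewrite leq_eqVlt ltnS => /predU1P [-> //|/IHm sub_km].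
exact: subset_trans sub_km (subsetUl _ _).
Qed.

Lemma cnbhd_sub_ball1 : cnbhd e v \subset ball e v 1.
Proof.
apply/subsetP => u; rewrite !inE => /predU1P [-> | evu]; first by rewrite eqxx.
by apply/orP; right; apply/existsP; exists v; rewrite inE eqxx.
Qed.

Lemma cnbhd_d_bounded d : (0 < d)%N -> d_bounded e d (cnbhd e v).
Proof.
by move=> d_gt0; exists v; apply: subset_trans cnbhd_sub_ball1 _; exact: sub_ball.
Qed.

End Balls.

Section Components.

Variables (T : finType) (e : rel T) (X : {set T}).
Hypothesis e_sym : symmetric e.

Lemma connect_sym_del_rel : connect_sym (del_rel e X).
Proof.
by apply: sym_connect_sym => x y; rewrite /del_rel /= e_sym (andbC (x \notin X)).
Qed.

Lemma components_disjoint D D' :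
  is_component e X D -> is_component e X D' -> D != D' -> [disjoint D & D'].
Proof.
move=> [x _ ->] [y _ ->] neqDD'; apply/pred0P => z /=; rewrite !inE.
apply/negbTE/negP => /and3P [/andP [_ cxz] _ cyz].
have cxy : connect (del_rel e X) x y.
  by apply: connect_trans cxz _; rewrite connect_sym_del_rel.
move/negP: neqDD'; apply; apply/eqP/setP => u; rewrite !inE.
apply: andb_id2l => _; apply/idP/idP => [cxu | cyu]; last exact: connect_trans cxy cyu.
by apply: connect_trans cxu; rewrite connect_sym_del_rel.
Qed.

End Components.

Section Weights.

Variables (R : numDomainType) (T : finType) (w : T -> R).

Lemma wt_setU (A B : {set T}) :
  [disjoint A & B] -> wt w (A :|: B) = wt w A + wt w B.
Proof. by move=> disjAB; rewrite /wt -bigU //; apply: eq_bigl => x; rewrite !inE. Qed.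

Lemma wt_subset (A B : {set T}) :
  (forall x, 0 <= w x) -> A \subset B -> wt w A <= wt w B.
Proof.
move=> w_ge0 subAB; rewrite [leRHS](big_setID A) /= (setIidPr subAB) lerDl.
exact: sumr_ge0.
Qed.

End Weights.

Lemma unbalanced_heavy_component (R : realDomainType) (T : finType) (e : rel T)
    (w : T -> R) (c : R) (X : {set T}) :
  ~ balanced_sep e w c X -> exists2 B, is_component e X B & c < wt w B.
Proof.
move=> unbalanced.
have [/existsP [x /andP [xX heavy]] | /existsPn light] :=
  boolP [exists x, (x \notin X) && (c < wt w (comp_of e X x))].
  by exists (comp_of e X x) => //; exists x.
by case: unbalanced => _ [x xX ->]; move: (light x); rewrite xX -leNgt.
Qed.

Lemma heavy_component_heaviest (R : realFieldType) (T : finType) (e : rel T)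
    (w : T -> R) (c : R) (X B D : {set T}) :
  symmetric e -> (forall x, 0 <= w x) -> wt w [set: T] = 1 -> 1 / 2 <= c ->
  is_component e X B -> c < wt w B ->
  is_component e X D -> D != B -> wt w D < wt w B.
Proof.
move=> e_sym w_ge0 wT c_ge compB heavyB compD neqDB.
have := wt_setU w (components_disjoint e_sym compD compB neqDB).
have := wt_subset w_ge0 (subsetT (D :|: B)).
rewrite wT; lra.
Qed.

Theorem lemma4p1 (R : realFieldType) (c : R) (d delta : nat)
  (T : finType) (e : rel T) (w : T -> R) :
  1 / 2 <= c -> c < 1 ->
  (0 < d)%N -> (0 < delta)%N -> (delta <= d)%N ->
  simple_graph e ->
  max_degree_eq e delta ->
  (forall x, 0 <= w x <= 1) ->
  wt w [set: T] = 1 ->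
  ~ (exists X : {set T}, d_bounded e d X /\ balanced_sep e w c X) ->
  forall v : T,
    exists2 B : {set T}, is_component e (cnbhd e v) B &
      forall D : {set T}, is_component e (cnbhd e v) D -> D != B ->
        wt w D < wt w B.
Proof.
move=> c_ge _ d_gt0 _ _ [e_sym _] _ w01 wT no_sep v.
have w_ge0 x : 0 <= w x by case/andP: (w01 x).
have [B compB heavyB] : exists2 B, is_component e (cnbhd e v) B & c < wt w B.
  apply: unbalanced_heavy_component => balanced; apply: no_sep.
  by exists (cnbhd e v); split => //; exact: cnbhd_d_bounded.
exists B => // D compD neqDB.
exact: heavy_component_heaviest e_sym w_ge0 wT c_ge compB heavyB compD neqDB.
Qed.
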